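(* Let $\mu^+_1,\mu^-_1,\mu^+_2,\mu^-_2\in\Lambda$ satisfy $\alpha^\vee_i(\mu^+_1)=\alpha^\vee_i(\mu^+_2)$ and $\alpha^\vee_i(\mu^-_1)=\alpha^\vee_i(\mu^-_2)$ for all $1\le i\le n-1$. Then the assignment $$E_{i,r}\mapsto E_{i,r},\quad F_{i,r}\mapsto F_{i,r},\quad \varphi^\pm_{i,\pm s}\mapsto\varphi^\pm_{i,\pm s\mp\epsilon^\vee_i(\mu^\pm_1-\mu^\pm_2)}$$ gives rise to a $\mathbb{C}(v)$-algebra isomorphism $U_{\mu^+_1,\mu^-_1}(L\mathfrak{gl}_n)\xrightarrow{\sim}U_{\mu^+_2,\mu^-_2}(L\mathfrak{gl}_n)$.
   Context: Let $n\ge2$, $\Lambda=\bigoplus_{j=1}^n\mathbb{Z}\epsilon_j$, $\epsilon^\vee_j$ dual basis, $\alpha^\vee_i=\epsilon^\vee_i-\epsilon^\vee_{i+1}$. For $\nu^+,\nu^-\in\Lambda$ put $d^\pm_j:=\epsilon^\vee_j(\nu^\pm)$. $U_{\nu^+,\nu^-}(L\mathfrak{gl}_n)$ is the associative $\mathbb{C}(v)$-algebra generated by $E_{i,r},F_{i,r}$ ($1\le i<n$, $r\in\mathbb{Z}$), $\varphi^\pm_{i,\pm s}$ ($1\le i\le n$, $s\ge d^\pm_i$) and $(\varphi^\pm_{i,\pm d^\pm_i})^{-1}$, with generating series $E_i(z)=\sum_{r\in\mathbb{Z}}E_{i,r}z^{-r}$, $F_i(z)=\sum_rF_{i,r}z^{-r}$,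 $\varphi^\pm_i(z)=\sum_{r\ge d^\pm_i}\varphi^\pm_{i,\pm r}z^{\mp r}$, $\delta(z)=\sum_{r\in\mathbb{Z}}z^r$, and defining relations (for all $i,j$, $\epsilon,\epsilon'\in\{\pm\}$; relations involving rational functions are understood after multiplying by denominators; $[a,b]_x:=ab-xba$): (U0) $[\varphi^\epsilon_i(z),\varphi^{\epsilon'}_j(w)]=0$, $\varphi^\pm_{i,\pm d^\pm_i}(\varphi^\pm_{i,\pm d^\pm_i})^{-1}=(\varphi^\pm_{i,\pm d^\pm_i})^{-1}\varphi^\pm_{i,\pm d^\pm_i}=1$; (U1) $[E_i(z),F_j(w)]=(v-v^{-1})\delta_{ij}\delta(z/w)\big(\varphi^+_i(z)^{-1}\varphi^+_{i+1}(z)-\varphi^-_i(z)^{-1}\varphi^-_{i+1}(z)\big)$; (U2) $\varphi^\epsilon_i(z)E_j(w)=\big(\frac{z-w}{v^{-1}z-vw}\big)^{\delta_{i,j+1}}\big(\frac{z-w}{vz-v^{-1}w}\big)^{\delta_{i,j}}E_j(w)\varphi^\epsilon_i(z)$; (U3) $\varphi^\epsilon_i(z)F_j(w)=\big(\frac{v^{-1}z-vw}{z-w}\big)^{\delta_{i,j+1}}\big(\frac{vz-v^{-1}w}{z-w}\big)^{\delta_{i,j}}F_j(w)\varphi^\epsilon_i(z)$; (U4) $E_i(z)E_j(w)=\big(\frac{vz-v^{-1}w}{v^{-1}z-vw}\big)^{\delta_{ij}}\big(\frac{z-w}{vz-v^{-1}w}\big)^{\delta_{i,j-1}}\big(\frac{v^{-1}z-vw}{z-w}\big)^{\delta_{i,j+1}}E_j(w)E_i(z)$;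 (U5) $F_i(z)F_j(w)=\big(\frac{v^{-1}z-vw}{vz-v^{-1}w}\big)^{\delta_{ij}}\big(\frac{vz-v^{-1}w}{z-w}\big)^{\delta_{i,j-1}}\big(\frac{z-w}{v^{-1}z-vw}\big)^{\delta_{i,j+1}}F_j(w)F_i(z)$; (U6),(U7) for $|i-j|=1$: $[E_i(z_1),[E_i(z_2),E_j(w)]_v]_{v^{-1}}+[E_i(z_2),[E_i(z_1),E_j(w)]_v]_{v^{-1}}=0$, and the same with $F$ in place of $E$. *)

From HB Require Import structures.
From mathcomp Require Import all_boot all_order all_algebra.
From mathcomp Require Import fraction.
From mathcomp Require Import complex.
From mathcomp Require Import Rstruct.
Set Implicit Arguments. Unset Strict Implicit. Unset Printing Implicit Defensive.
Import Order.TTheory GRing.Theory Num.Theory.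
Local Open Scope ring_scope.

Definition CC : Type := complex.complex Rdefinitions.R.
Definition Cv : Type := {fraction {poly CC}}.
Definition vq : Cv := @FracField.tofrac _ ('X : {poly CC}).

(* Lambda = Z^n : a weight nu is its coordinate vector; eps_j^vee(nu) with j 1-based *)
Definition weight (n : nat) := 'I_n -> int.
Definition epsv (n : nat) (nu : weight n) (j : nat) : int :=
  if (insub j.-1 : option 'I_n) is Some k then nu k else 0.
Definition alphav (n : nat) (i : nat) (nu : weight n) : int :=
  epsv nu i - epsv nu i.+1.

(* A family of generators in an algebra A:
   gE i r = E_{i,r}, gF i r = F_{i,r},
   gP e i m = phi^{e}_{i,m} (e = true for '+', false for '-'; m is the actual
   subscript, i.e. m = s for phi^+_{i,s} and m = -s for phi^-_{i,-s}),
   gPi e i = (phi^{e}_{i, e d^e_i})^{-1}. *)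
Record gens (A : Type) := Gens {
  gE : nat -> int -> A;
  gF : nat -> int -> A;
  gP : bool -> nat -> int -> A;
  gPi : bool -> nat -> A }.

Section Rels.
Variables (n : nat) (nup num : weight n) (A : algType Cv) (g : gens A).

Definition sgn (e : bool) : int := if e then 1 else -1.
Definition dd (e : bool) (i : nat) : int := if e then epsv nup i else epsv num i.
(* phi^e_{i,m} is a generator iff e m >= d^e_i *)
Definition inrange (e : bool) (i : nat) (m : int) : bool := dd e i <= sgn e * m.
(* coefficient of z^{-k} in phi^e_i(z) *)
Definition phic (e : bool) (i : nat) (k : int) : A :=
  if inrange e i k then gP g e i k else 0.
(* t-th coefficient of phi^e_i(z), counted from the leading one *)
Definition coff (e : bool) (i : nat) (t : nat) : A := phic e i (sgn e * (dd e i + t%:Z)).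
(* first coefficients of the inverse series phi^e_i(z)^{-1} *)
Fixpoint ginv_seq (e : bool) (i : nat) (t : nat) : seq A :=
  match t with
  | 0 => [:: gPi g e i]
  | t'.+1 => rcons (ginv_seq e i t')
      (- (gPi g e i * \sum_(j < t'.+1) coff e i j.+1 * nth 0 (ginv_seq e i t') (t' - j)))
  end.
Definition ginv (e : bool) (i : nat) (t : nat) : A := nth 0 (ginv_seq e i t) t.
(* coefficient of z^{-k} in phi^e_i(z)^{-1} phi^e_{i+1}(z) *)
Definition Psi (e : bool) (i : nat) (k : int) : A :=
  match sgn e * k - dd e i.+1 + dd e i with
  | Posz N => \sum_(t < N.+1) ginv e i t * coff e i.+1 (N - t)
  | Negz _ => 0
  end.

(* relation  (a z + b w) L(z,w) = (c z + e w) R(z,w), where L, R have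
   coefficient of z^{-k} w^{-l} given by Lc k l, Rc k l *)
Definition linrel (a b c e : Cv) (Lc Rc : int -> int -> A) : Prop :=
  forall k l : int,
    a *: Lc (k + 1) l + b *: Lc k (l + 1) = c *: Rc (k + 1) l + e *: Rc k (l + 1).

(* linear forms  z - w, v z - v^{-1} w, v^{-1} z - v w  as coefficient pairs *)
Definition lf_zw : Cv * Cv := (1, -1).
Definition lf_vz : Cv * Cv := (vq, - vq^-1).
Definition lf_iz : Cv * Cv := (vq^-1, - vq).
Definition lf_one : Cv * Cv := (1, 0).

(* X(z) Y(w) = (num/den) Y(w) X(z), written den * (X Y) = num * (Y X) *)
Definition fracrel (nm dn : Cv * Cv) (Lc Rc : int -> int -> A) : Prop :=
  linrel dn.1 dn.2 nm.1 nm.2 Lc Rc.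

Definition qbr (x : Cv) (a b : A) : A := a * b - x *: (b * a).

Definition isE (i : nat) := (1 <= i <= n.-1)%N.
Definition isP (i : nat) := (1 <= i <= n)%N.

Definition rels : Prop :=
  (forall e e' i j k l, isP i -> isP j -> inrange e i k -> inrange e' j l ->
      gP g e i k * gP g e' j l = gP g e' j l * gP g e i k) /\
  (forall e i, isP i ->
      gP g e i (sgn e * dd e i) * gPi g e i = 1 /\
      gPi g e i * gP g e i (sgn e * dd e i) = 1) /\
  (forall i j r s, isE i -> isE j ->
      gE g i r * gF g j s - gF g j s * gE g i r =
      if i == j then (vq - vq^-1) *: (Psi true i (r + s) - Psi false i (r + s)) else 0) /\
  (forall e i j, isP i -> isE j ->
      fracrel (if i == j.+1 then lf_zw else if i == j then lf_zw else lf_one)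
              (if i == j.+1 then lf_iz else if i == j then lf_vz else lf_one)
              (fun k l => phic e i k * gE g j l) (fun k l => gE g j l * phic e i k)) /\
  (forall e i j, isP i -> isE j ->
      fracrel (if i == j.+1 then lf_iz else if i == j then lf_vz else lf_one)
              (if i == j.+1 then lf_zw else if i == j then lf_zw else lf_one)
              (fun k l => phic e i k * gF g j l) (fun k l => gF g j l * phic e i k)) /\
  (forall i j, isE i -> isE j ->
      fracrel (if i == j then lf_vz else if i.+1 == j then lf_zw
               else if i == j.+1 then lf_iz else lf_one)
              (if i == j then lf_iz else if i.+1 == j then lf_vz
               else if i == j.+1 then lf_zw else lf_one)
              (fun k l => gE g i k * gE g j l) (fun k l => gE g j l * gE g i k)) /\
  (forall i j, isE i -> isE j ->
      fracrel (if i == j then lf_iz else if i.+1 == j then lf_vz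
               else if i == j.+1 then lf_zw else lf_one)
              (if i == j then lf_vz else if i.+1 == j then lf_zw
               else if i == j.+1 then lf_iz else lf_one)
              (fun k l => gF g i k * gF g j l) (fun k l => gF g j l * gF g i k)) /\
  (forall i j r1 r2 s, isE i -> isE j -> (i == j.+1) || (j == i.+1) ->
      qbr vq^-1 (gE g i r1) (qbr vq (gE g i r2) (gE g j s)) +
      qbr vq^-1 (gE g i r2) (qbr vq (gE g i r1) (gE g j s)) = 0) /\
  (forall i j r1 r2 s, isE i -> isE j -> (i == j.+1) || (j == i.+1) ->
      qbr vq^-1 (gF g i r1) (qbr vq (gF g i r2) (gF g j s)) +
      qbr vq^-1 (gF g i r2) (qbr vq (gF g i r1) (gF g j s)) = 0).

End Rels.

Definition agree (n : nat) (nup num : weight n) (A B : algType Cv)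
    (f : A -> B) (g : gens A) (h : gens B) : Prop :=
  (forall i r, isE n i -> f (gE g i r) = gE h i r /\ f (gF g i r) = gF h i r) /\
  (forall e i m, isP n i -> inrange nup num e i m -> f (gP g e i m) = gP h e i m) /\
  (forall e i, isP n i -> f (gPi g e i) = gPi h e i).

(* (A, g) is a presentation of U_{nup,num}(L gl_n): the generators satisfy the
   defining relations and A is universal (initial) among C(v)-algebras with such
   a family of elements. *)
Definition presents (n : nat) (nup num : weight n) (A : algType Cv) (g : gens A) : Prop :=
  rels nup num g /\
  forall (B : algType Cv) (h : gens B), rels nup num h ->
    (exists f : {lrmorphism A -> B}, agree nup num f g h) /\
    (forall f1 f2 : {lrmorphism A -> B},
        agree nup num f1 g h -> agree nup num f2 g h -> f1 =1 f2).

From HB Require Import structures.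
From mathcomp Require Import all_boot all_order all_algebra.
From mathcomp Require Import zify.
Set Implicit Arguments. Unset Strict Implicit.
Import GRing.Theory.
Local Open Scope ring_scope.

(* Shifting subscripts, phi^e_{i,m} |-> phi^e_{i, m - e c_i} with
   c_i = eps_i^vee(mu1^e - mu2^e), multiplies the series phi^e_i(z) by the monomial
   z^{-e c_i}.  Relations (U0), (U2), (U3) are insensitive to such a factor, and (U4)-(U7)
   do not involve phi.  In (U1) only phi_i(z)^{-1} phi_{i+1}(z) occurs, and it is
   multiplied by z^{e (c_i - c_{i+1})} = 1 because alpha_i^vee(mu1^e) = alpha_i^vee(mu2^e).
   Hence the shifted generators of U_{mu2} satisfy the relations of U_{mu1} and vice
   versa, and the two induced morphisms are mutually inverse since an endomorphism
   fixing the generators of a presented algebra is the identity. *)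

Section ShiftedGenerators.
Variables (n : nat) (nu1p nu1m nu2p nu2m : weight n).

Definition phi_shift (e : bool) (i : nat) (k : int) : int :=
  k - sgn e * (dd nu1p nu1m e i - dd nu2p nu2m e i).

Definition shifted_gens (A : algType Cv) (g : gens A) : gens A :=
  Gens (gE g) (gF g) (fun e i m => gP g e i (phi_shift e i m)) (gPi g).

Lemma inrange_shift e i k :
  inrange nu1p nu1m e i k = inrange nu2p nu2m e i (phi_shift e i k).
Proof. by rewrite /inrange /phi_shift /sgn; case: e; apply/idP/idP; lia. Qed.

Lemma phi_shiftD1 e i k : phi_shift e i (k + 1) = phi_shift e i k + 1.
Proof. rewrite /phi_shift; lia. Qed.

Lemma phi_shift_lead e i :
  phi_shift e i (sgn e * dd nu1p nu1m e i) = sgn e * dd nu2p nu2m e i.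
Proof. by rewrite /phi_shift /sgn; case: e; lia. Qed.

Variables (A : algType Cv) (g : gens A).

Lemma phic_shift e i k :
  phic nu1p nu1m (shifted_gens g) e i k = phic nu2p nu2m g e i (phi_shift e i k).
Proof. by rewrite /phic inrange_shift. Qed.

Lemma coff_shift e i t :
  coff nu1p nu1m (shifted_gens g) e i t = coff nu2p nu2m g e i t.
Proof. by rewrite /coff phic_shift /phi_shift /sgn; case: e; congr phic; lia. Qed.

Lemma ginv_shift e i t :
  ginv nu1p nu1m (shifted_gens g) e i t = ginv nu2p nu2m g e i t.
Proof.
rewrite /ginv; congr (nth _ _ t); elim: t => [//|t IHt] /=; rewrite IHt.
by congr (rcons _ (- (_ * _))); apply: eq_bigr => j _; rewrite coff_shift.
Qed.

Hypothesis alphav_p : forall i, isE n i -> alphav i nu1p = alphav i nu2p.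
Hypothesis alphav_m : forall i, isE n i -> alphav i nu1m = alphav i nu2m.

Lemma Psi_shift e i k : isE n i ->
  Psi nu1p nu1m (shifted_gens g) e i k = Psi nu2p nu2m g e i k.
Proof.
move=> Ei; move: (alphav_p Ei) (alphav_m Ei); rewrite /alphav => eq_p eq_m.
rewrite /Psi; have -> : sgn e * k - dd nu1p nu1m e i.+1 + dd nu1p nu1m e i =
                        sgn e * k - dd nu2p nu2m e i.+1 + dd nu2p nu2m e i.
  by rewrite /dd; case: e; lia.
case: (_ - _ + _) => // N.
by apply: eq_bigr => t _; rewrite ginv_shift coff_shift.
Qed.

Lemma rels_shift : rels nu2p nu2m g -> rels nu1p nu1m (shifted_gens g).
Proof.
move=> [U0 [U0inv [U1 [U2 [U3 EFrels]]]]].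
split.
  by move=> e e' i j k l Pi Pj; rewrite !inrange_shift; exact: U0.
split.
  by move=> e i Pi /=; rewrite phi_shift_lead; exact: U0inv.
split.
  by move=> i j r s Ei Ej /=; rewrite U1 //; case: eqP => // ->; rewrite !Psi_shift.
split.
  move=> e i j Pi Ej k l; rewrite /= !phic_shift phi_shiftD1; exact: U2.
split.
  move=> e i j Pi Ej k l; rewrite /= !phic_shift phi_shiftD1; exact: U3.
exact: EFrels.
Qed.

End ShiftedGenerators.

Lemma phi_shiftK n (nu1p nu1m nu2p nu2m : weight n) e i :
  cancel (phi_shift nu1p nu1m nu2p nu2m e i) (phi_shift nu2p nu2m nu1p nu1m e i).
Proof. by move=> k; rewrite /phi_shift; lia. Qed.

Lemma agree_shift_comp n (nu1p nu1m nu2p nu2m : weight n) (A1 A2 : algType Cv)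
    (g1 : gens A1) (g2 : gens A2) (f : {lrmorphism A1 -> A2}) (f' : {lrmorphism A2 -> A1}) :
  agree nu1p nu1m f g1 (shifted_gens nu1p nu1m nu2p nu2m g2) ->
  agree nu2p nu2m f' g2 (shifted_gens nu2p nu2m nu1p nu1m g1) ->
  agree nu1p nu1m (f' \o f) g1 g1.
Proof.
move=> [fEF [fP fPi]] [f'EF [f'P f'Pi]]; split; [|split] => /=.
- move=> i r Ei; have [-> ->] := fEF i r Ei.
  by have [-> ->] := f'EF i r Ei.
- move=> e i m Pi Im; rewrite fP // f'P /= ?phi_shiftK //.
  by rewrite -inrange_shift.
- by move=> e i Pi; rewrite fPi // f'Pi.
Qed.

Lemma presents_agree_id n (nup num : weight n) (A : algType Cv) (g : gens A)
    (f : {lrmorphism A -> A}) :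
  presents nup num g -> agree nup num f g g -> f =1 id.
Proof.
move=> [Rg univ] fg; have [_ uniq] := univ _ _ Rg.
exact: (uniq f idfun).
Qed.

Theorem lemma3p2 (n : nat) (hn : (2 <= n)%N) (mu1p mu1m mu2p mu2m : weight n) :
  (forall i : nat, (1 <= i <= n.-1)%N -> alphav i mu1p = alphav i mu2p) ->
  (forall i : nat, (1 <= i <= n.-1)%N -> alphav i mu1m = alphav i mu2m) ->
  forall (A1 : algType Cv) (g1 : gens A1) (A2 : algType Cv) (g2 : gens A2),
    presents mu1p mu1m g1 -> presents mu2p mu2m g2 ->
    exists f : {lrmorphism A1 -> A2},
      bijective f /\
      (forall (i : nat) (r : int), isE n i ->
         f (gE g1 i r) = gE g2 i r /\ f (gF g1 i r) = gF g2 i r) /\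
      (forall (i : nat) (s : int), isP n i -> inrange mu1p mu1m true i s ->
         f (gP g1 true i s) = gP g2 true i (s - (epsv mu1p i - epsv mu2p i))) /\
      (forall (i : nat) (s : int), isP n i -> inrange mu1p mu1m false i (- s) ->
         f (gP g1 false i (- s)) = gP g2 false i (- s + (epsv mu1m i - epsv mu2m i))).
Proof.
move=> eq_p eq_m A1 g1 A2 g2 pres1 pres2.
have eq_p' i (Ei : isE n i) : alphav i mu2p = alphav i mu1p by rewrite eq_p.
have eq_m' i (Ei : isE n i) : alphav i mu2m = alphav i mu1m by rewrite eq_m.
have [[f fg] _] := pres1.2 _ _ (rels_shift eq_p eq_m pres2.1).
have [[f' f'g] _] := pres2.2 _ _ (rels_shift eq_p' eq_m' pres1.1).
have [fEF [fP _]] := fg.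
exists f; split; [|split; [exact: fEF|split]].
- exists f'.
    exact: presents_agree_id pres1 (agree_shift_comp fg f'g).
  exact: presents_agree_id pres2 (agree_shift_comp f'g fg).
- by move=> i s Pi Is; rewrite fP //=; congr gP; rewrite /phi_shift /dd /sgn; lia.
- by move=> i s Pi Is; rewrite fP //=; congr gP; rewrite /phi_shift /dd /sgn; lia.
Qed.
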